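(* Consider the multicast coalitional game with player set $\mathcal{N}$ and value function $$v(S)=\sum_{i\in S}U_i-\sum_{i\in S}\frac{\alpha_i}{R_S}-\frac{\beta+\gamma}{R_S},\qquad R_S=\min_{i\in S}R_i,$$ for nonempty $S\subseteq\mathcal{N}$. Let $\mathbf{P}=\{P_1,\dots,P_n\}$ be a partition of $\mathcal{N}$ into nonempty sets, with $R_{j,min}$, $R_{j,max}$ the minimum and maximum rates of users in $P_j$. Let $\alpha_{min}=\min_{i\in\mathcal{N}}\alpha_i$, $\alpha_{max}=\max_{i\in\mathcal{N}}\alpha_i$. If $$\frac{R_{j,max}}{R_{j,min}}\le\frac{2(\alpha_{min}+\beta+\gamma)}{\alpha_{max}|P_j|+\beta+\gamma}\quad\forall j\in\{1,\dots,n\},$$ then for every $\mathbf{P}$-compatible collection $\mathbf{S}=\{S_1,\dots,S_k\}$ (mutually disjoint nonempty sets with $\bigcup_{i=1}^kS_i\subseteq P_j$ for some $j$), $$v\Big(\bigcup_{i=1}^kS_i\Big)\ge\sum_{i=1}^kv(S_i).$$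
   Context: A transmitter multicasts a file of size $X>0$ bits to users $\mathcal{N}=\{1,\dots,N\}$. User $i$ has valuation $U_i\in\mathbb{R}$, downloads at rate $R_i>0$, and consumes receive power $P_{Rx,i}>0$; the transmitter transmits at power $P_{Tx}>0$. Costs per unit energy are $a>0$ at users and $b>0$ at the transmitter; bandwidth cost per second is $w>0$. Set $\alpha_i=aP_{Rx,i}X$, $\beta=bP_{Tx}X$, $\gamma=wX$. *)

From mathcomp Require Import all_boot all_order all_algebra.
Set Implicit Arguments. Unset Strict Implicit. Unset Printing Implicit Defensive.
Import Order.TTheory GRing.Theory Num.Theory.
Local Open Scope ring_scope.

(* minimum / maximum of f over a finite set S (0 if S is empty; only used for
   nonempty S) *)
Definition setmin (R : realDomainType) (T : finType) (f : T -> R) (S : {set T}) : R :=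
  match [pick i in S] with
  | Some i0 => \big[Num.min/f i0]_(i in S) f i
  | None => 0
  end.

Definition setmax (R : realDomainType) (T : finType) (f : T -> R) (S : {set T}) : R :=
  match [pick i in S] with
  | Some i0 => \big[Num.max/f i0]_(i in S) f i
  | None => 0
  end.

Definition RS (R : realDomainType) (T : finType) (rate : T -> R) (S : {set T}) : R :=
  setmin rate S.

Definition mvalue (R : realFieldType) (T : finType) (U rate alpha : T -> R)
    (beta gamma : R) (S : {set T}) : R :=
  \sum_(i in S) U i - \sum_(i in S) alpha i / RS rate S - (beta + gamma) / RS rate S.

From mathcomp Require Import all_boot all_order all_algebra.
From mathcomp Require Import ring lra.
Set Implicit Arguments. Unset Strict Implicit. Unset Printing Implicit Defensive.
Import Order.TTheory GRing.Theory Num.Theory.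
Local Open Scope ring_scope.

(* The utilities are additive over disjoint sets, so only the costs
   [(sum_(i in S) alpha_i + c) / R_S], with [c = beta + gamma], matter.  All
   rates inside [P_j] lie in [[R_min, R_max]]; with [A] the total [alpha] of
   the union, the union costs at most [(A + c) / R_min] while [k >= 2] pieces
   cost at least [(A + 2 c) / R_max].  The hypothesis bounds [R_max / R_min] by
   [2 (alpha_min + c) / (alpha_max |P_j| + c)], which is at most
   [(A + 2 c) / (A + c)] because [A <= alpha_max |P_j|] and
   [2 alpha_min <= alpha_max |P_j|]. *)

Section SetExtrema.
Variables (R : realDomainType) (T : finType) (f : T -> R).

Lemma setmin_le (S : {set T}) i : i \in S -> setmin f S <= f i.
Proof.
move=> Si; rewrite /setmin; case: pickP => [i0 _|/(_ i)]; last by rewrite Si.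
by rewrite (bigD1 i) //= ge_min lexx.
Qed.

Lemma le_setmax (S : {set T}) i : i \in S -> f i <= setmax f S.
Proof.
move=> Si; rewrite /setmax; case: pickP => [i0 _|/(_ i)]; last by rewrite Si.
by rewrite (bigD1 i) //= le_max lexx.
Qed.

Lemma setmin_mem (S : {set T}) : S != set0 -> exists2 i, i \in S & setmin f S = f i.
Proof.
case/set0Pn=> j Sj; rewrite /setmin; case: pickP => [i0 Si0|/(_ j)]; last by rewrite Sj.
apply: (big_ind (fun x => exists2 i, i \in S & x = f i)) => [|x y [i1 ? ->] [i2 ? ->]|i Si].
- by exists i0.
- by rewrite /Num.min; case: ifP => _; [exists i1 | exists i2].
- by exists i.
Qed.

Lemma setmin_gt0 (S : {set T}) : (forall i, 0 < f i) -> S != set0 -> 0 < setmin f S.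
Proof. by move=> f_gt0 /setmin_mem[i _ ->]. Qed.

Lemma setmin_subset (S S' : {set T}) : S != set0 -> S \subset S' -> setmin f S' <= setmin f S.
Proof. by move=> /setmin_mem[i Si ->] /subsetP sSS'; apply/setmin_le/sSS'. Qed.

Lemma setmin_le_setmax (S S' : {set T}) : S != set0 -> S \subset S' -> setmin f S <= setmax f S'.
Proof. by move=> /setmin_mem[i Si ->] /subsetP sSS'; apply/le_setmax/sSS'. Qed.

Lemma sum_le_setmax_card (S : {set T}) : \sum_(i in S) f i <= setmax f [set: T] *+ #|S|.
Proof. by rewrite -sumr_const; apply: ler_sum => i _; apply: le_setmax; rewrite inE. Qed.

End SetExtrema.

Lemma leq_card_disjoint_bigcup (I T : finType) (S : I -> {set T}) :
  (forall i, S i != set0) -> (forall i j, i != j -> [disjoint S i & S j]) ->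
  (#|I| <= #|\bigcup_i S i|)%N.
Proof.
move=> S_neq0 disjS; rewrite -sum1_card partition_disjoint_bigcup //=.
by rewrite -sum1_card; apply: leq_sum => i _; rewrite sum1_card card_gt0.
Qed.

Lemma ratio_le_add2 (R : realFieldType) (m M A c : R) :
  0 < c -> 0 <= A -> A <= M -> 2 * m <= M ->
  2 * (m + c) / (M + c) <= (A + 2 * c) / (A + c).
Proof.
move=> c_gt0 A_ge0 le_AM le_2mM.
have Ac_gt0 : 0 < A + c by lra.
have Mc_gt0 : 0 < M + c by lra.
apply: (@le_trans _ _ ((M + 2 * c) / (M + c))).
  by apply: ler_wpM2r; [rewrite invr_ge0; exact: ltW | lra].
rewrite ler_pdivrMr // mulrAC ler_pdivlMr // -subr_ge0.
have -> : (A + 2 * c) * (M + c) - (M + 2 * c) * (A + c) = c * (M - A) by ring.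
by apply: mulr_ge0; [apply: ltW | rewrite subr_ge0].
Qed.

Section Cost.
Variables (R : realFieldType) (T : finType) (rate alpha : T -> R) (c : R).

Definition mcost (S : {set T}) : R := (\sum_(i in S) alpha i + c) / RS rate S.

(* The empty set has rate [RS rate set0 = 0] and [x / 0 = 0]. *)
Lemma mcost_set0 : mcost set0 = 0.
Proof.
rewrite /mcost /RS /setmin; case: pickP => [i|_]; first by rewrite inE.
by rewrite invr0 mulr0.
Qed.

Hypotheses (rate_gt0 : forall i, 0 < rate i) (alpha_ge0 : forall i, 0 <= alpha i)
  (c_gt0 : 0 < c).

Lemma mcost_bigcup_le k (S : 'I_k -> {set T}) (Pj : {set T}) :
  (1 < k)%N -> (forall i, S i != set0) ->
  (forall i j, i != j -> [disjoint S i & S j]) ->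
  \bigcup_(i < k) S i \subset Pj ->
  let A := \sum_(x in \bigcup_(i < k) S i) alpha x in
  setmax rate Pj / setmin rate Pj <= (A + 2 * c) / (A + c) ->
  mcost (\bigcup_(i < k) S i) <= \sum_(i < k) mcost (S i).
Proof.
move=> k_gt1 S_neq0 disjS sUPj.
set U := \bigcup_(i < k) S i in sUPj *; move=> A ratio_le.
have U_neq0 : U != set0.
  case/set0Pn: (S_neq0 (Ordinal (ltnW k_gt1))) => x Sx.
  by apply/set0Pn; exists x; apply/bigcupP; exists (Ordinal (ltnW k_gt1)).
have Pj_neq0 : Pj != set0 by apply: contraNneq U_neq0 => Pj0; rewrite -subset0 -Pj0.
set mn := setmin rate Pj; set Mx := setmax rate Pj.
have mn_gt0 : 0 < mn by apply: setmin_gt0.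
have Mx_gt0 : 0 < Mx := lt_le_trans mn_gt0 (setmin_le_setmax rate Pj_neq0 (subxx Pj)).
have RSU_gt0 : 0 < RS rate U by apply: setmin_gt0.
have A_ge0 : 0 <= A by apply: sumr_ge0.
have cost_Si i : (\sum_(x in S i) alpha x + c) / Mx <= mcost (S i).
  have sSiPj : S i \subset Pj by apply: subset_trans sUPj; apply: bigcup_sup.
  apply: ler_wpM2l; first by apply: addr_ge0; [apply: sumr_ge0|apply: ltW].
  by rewrite lef_pV2 ?posrE ?setmin_gt0 ?setmin_le_setmax.
apply: le_trans (ler_sum _ (fun i _ => cost_Si i)).
rewrite -mulr_suml big_split /= sumr_const card_ord -partition_disjoint_bigcup // -/U -/A.
apply: (@le_trans _ _ ((A + c) / mn)).
  apply: ler_wpM2l; first by apply: addr_ge0 => //; apply: ltW.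
  by rewrite lef_pV2 ?posrE ?setmin_subset.
apply: (@le_trans _ _ ((A + 2 * c) / Mx)).
  have Ac_gt0 : 0 < A + c := ltr_wpDl A_ge0 c_gt0.
  move: ratio_le; rewrite ler_pdivrMr // mulrAC ler_pdivlMr //.
  by rewrite ler_pdivrMr // mulrAC ler_pdivlMr // mulrC.
apply: ler_wpM2r; first by rewrite invr_ge0; apply: ltW.
by rewrite lerD2l -[c *+ k]mulr_natl ler_pM2r // ler_nat.
Qed.

End Cost.

Lemma mvalueE (R : realFieldType) (T : finType) (U rate alpha : T -> R)
    (beta gamma : R) (S : {set T}) :
  mvalue U rate alpha beta gamma S = \sum_(i in S) U i - mcost rate alpha (beta + gamma) S.
Proof. by rewrite /mvalue /mcost -mulr_suml; ring. Qed.

Lemma mvalue_bigcup_ge (R : realFieldType) (T : finType) (U rate alpha : T -> R)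
    (beta gamma : R) k (S : 'I_k -> {set T}) :
  (forall i j, i != j -> [disjoint S i & S j]) ->
  mcost rate alpha (beta + gamma) (\bigcup_(i < k) S i)
    <= \sum_(i < k) mcost rate alpha (beta + gamma) (S i) ->
  \sum_(i < k) mvalue U rate alpha beta gamma (S i)
    <= mvalue U rate alpha beta gamma (\bigcup_(i < k) S i).
Proof.
move=> disjS le_cost.
rewrite mvalueE (eq_bigr _ (fun i _ => mvalueE _ _ _ _ _ (S i))) sumrB.
by rewrite partition_disjoint_bigcup // lerD2l lerN2.
Qed.

Theorem lemma2 (R : realFieldType) (T : finType)
    (U rate PRx : T -> R) (X a b w PTx : R)
    (hX : 0 < X) (ha : 0 < a) (hb : 0 < b) (hw : 0 < w) (hPTx : 0 < PTx)
    (hrate : forall i, 0 < rate i) (hPRx : forall i, 0 < PRx i)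
    (P : {set {set T}}) (hP : partition P [set: T]) :
  let alpha := fun i => a * PRx i * X in
  let beta := b * PTx * X in
  let gamma := w * X in
  let alpha_min := setmin alpha [set: T] in
  let alpha_max := setmax alpha [set: T] in
  (forall Pj, Pj \in P ->
     setmax rate Pj / setmin rate Pj
       <= 2 * (alpha_min + beta + gamma) / (alpha_max * #|Pj|%:R + beta + gamma)) ->
  forall (k : nat) (S : 'I_k -> {set T}),
    (forall i, S i != set0) ->
    (forall i j, i != j -> [disjoint S i & S j]) ->
    (exists2 Pj, Pj \in P & \bigcup_(i < k) S i \subset Pj) ->
    mvalue U rate alpha beta gamma (\bigcup_(i < k) S i)
      >= \sum_(i < k) mvalue U rate alpha beta gamma (S i).
Proof.
move=> alpha beta gamma amin amax ratio_le k S S_neq0 disjS [Pj Pj_in sUPj].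
have alpha_gt0 i : 0 < alpha i by rewrite !mulr_gt0.
have c_gt0 : 0 < beta + gamma by rewrite addr_gt0 ?mulr_gt0.
apply: mvalue_bigcup_ge => //.
case: k S S_neq0 disjS sUPj => [|[|k]] S S_neq0 disjS sUPj.
- by rewrite !big_ord0 mcost_set0.
- by rewrite !big_ord1.
apply: (mcost_bigcup_le hrate (fun i => ltW (alpha_gt0 i)) c_gt0 _ S_neq0 disjS sUPj) => //.
case/set0Pn: (S_neq0 ord0) => x _.
have T_neq0 : [set: T] != set0 by apply/set0Pn; exists x; rewrite inE.
have amin_gt0 : 0 < amin := setmin_gt0 alpha_gt0 T_neq0.
have le_amin_amax : amin <= amax := setmin_le_setmax alpha T_neq0 (subxx _).
have amax_gt0 : 0 < amax := lt_le_trans amin_gt0 le_amin_amax.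
have two_le_card : 2 <= #|Pj|%:R :> R.
  rewrite (ler_nat _ 2); apply: (leq_trans _ (subset_leq_card sUPj)).
  by apply: (leq_trans _ (leq_card_disjoint_bigcup S_neq0 disjS)); rewrite card_ord.
apply: le_trans (ratio_le Pj Pj_in) _; rewrite -!addrA; apply: ratio_le_add2 => //.
- by apply: sumr_ge0 => i _; apply: ltW.
- apply: le_trans (sum_le_setmax_card _ _) _.
  by rewrite -/amax -[amax *+ _]mulr_natr ler_pM2l // ler_nat subset_leq_card.
- by rewrite mulrC; apply: ler_pM => //; apply: ltW.
Qed.
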